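(* Let $X\in\mathbb{R}^{n\times p}$ be a fixed matrix with rows $X_1^\top,\dots,X_n^\top$, let $\beta\in\mathbb{R}^p$, let $\epsilon$ be a random vector in $\mathbb{R}^n$, and let $D\subset\mathbb{R}^p$. Let $G:\mathbb{R}^n\to\mathbb{R}$ be a function, and let $\psi=(\psi_1,\dots,\psi_n)$, $\varphi=(\varphi_1,\dots,\varphi_n)$ with each $\psi_i,\varphi_i:\mathbb{R}\to\mathbb{R}$. Fix $q\in(0,1)$ and $c_0>0$. Suppose: (i) there is $c_1>0$ such that $$\Pr\Big\{|\langle \epsilon,\varphi(Xv)-\varphi(X\beta)\rangle|\le c_1\sqrt{n}\,\|v-\beta\|_1 \text{ for all } v\in D\Big\}\ge 1-c_0q;$$ (ii) there is $c_2>0$ such that $G(\psi(Xv)-\psi(X\beta))\ge c_2 n\|v-\beta\|_2^2$ for all $v\in D$. Let $c_r=2c_1\sqrt{n}$ and suppose $\hat\beta\in D$ is a random variable that always satisfies $$G(\psi(X\hat\beta)-\psi(X\beta))\le 2|\langle\epsilon,\varphi(X\hat\beta)-\varphi(X\beta)\rangle| - c_r(\|\hat\beta\|_1-\|\beta\|_1).$$ Then, with $\kappa_r=4c_1/c_2$, $$\Pr\Big\{\|\hat\beta-\beta\|_2\le \kappa_r\sqrt{|\mathrm{spt}(\beta)|/n}\Big\}\ge 1-c_0q.$$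
   Context: For functions $g_1,\dots,g_n:\mathbb{R}\to\mathbb{R}$, $g=(g_1,\dots,g_n)$ and $x\in\mathbb{R}^n$, write $g(x)=(g_1(x_1),\dots,g_n(x_n))^\top$. For $v\in\mathbb{R}^p$, $\|v\|_a$ is the $\ell_a$-norm, and $\mathrm{spt}(v)=\{i: v_i\neq 0\}$ is the support of $v$, with $|\mathrm{spt}(v)|$ its cardinality. $\langle\cdot,\cdot\rangle$ is the Euclidean inner product on $\mathbb{R}^n$. *)

From HB Require Import structures.
From mathcomp Require Import all_boot all_order all_algebra.
From mathcomp Require Import all_classical all_reals all_analysis.
Set Implicit Arguments. Unset Strict Implicit. Unset Printing Implicit Defensive.
Import Order.TTheory GRing.Theory Num.Theory.
Local Open Scope ring_scope.

Definition matvec (R : realType) (n p : nat) (X : 'M[R]_(n, p)) (v : 'I_p -> R)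
  : 'I_n -> R := fun i => \sum_(j < p) X i j * v j.

Definition compapp (R : realType) (n : nat) (g : 'I_n -> R -> R) (x : 'I_n -> R)
  : 'I_n -> R := fun i => g i (x i).

Definition vsub (R : realType) (k : nat) (x y : 'I_k -> R) : 'I_k -> R :=
  fun i => x i - y i.

Definition inner (R : realType) (n : nat) (x y : 'I_n -> R) : R :=
  \sum_(i < n) x i * y i.

Definition norm1 (R : realType) (k : nat) (v : 'I_k -> R) : R :=
  \sum_(i < k) `|v i|.
Definition norm2 (R : realType) (k : nat) (v : 'I_k -> R) : R :=
  Num.sqrt (\sum_(i < k) v i ^+ 2).

Definition spt (R : realType) (k : nat) (v : 'I_k -> R) : {set 'I_k} :=
  [set i | v i != 0].

From HB Require Import structures.
From mathcomp Require Import all_boot all_order all_algebra.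
From mathcomp Require Import all_classical all_reals all_analysis.
From mathcomp Require Import ring lra.
Import Order.TTheory GRing.Theory Num.Theory.
Local Open Scope classical_set_scope.
Local Open Scope ring_scope.

(* On the event of (i), with [D := betahat - beta], [s := |spt beta|], the
   inequality satisfied by [betahat] and (ii) give
     c2 n |D|_2^2 <= 2 c1 sqrt n (|D|_1 - |betahat|_1 + |beta|_1)
                  <= 4 c1 sqrt n (sum of |D_i| over spt beta)
                  <= 4 c1 sqrt n sqrt s |D|_2,
   the last step by Cauchy-Schwarz on the support.  Dividing by c2 n |D|_2
   yields the bound, so the event of (i) is contained in the final event. *)

Lemma norm1_vsub_le_spt {R : realType} {p : nat} (b v : 'I_p -> R) :
  norm1 (vsub v b) - norm1 v + norm1 b <= 2 * \sum_(i in spt b) `|vsub v b i|.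
Proof.
rewrite /norm1 -sumrB -big_split /= mulr_sumr [leRHS]big_mkcond /=.
apply: ler_sum => i _; rewrite /spt inE /vsub.
case: eqP => [->|_]; first by rewrite subr0 normr0 addr0 subrr.
have := ler_normB (v i) (v i - b i); rewrite subKr /=; lra.
Qed.

Lemma sqr_sum_le_card {R : realDomainType} {I : finType} (S : {set I})
    (y : I -> R) :
  (\sum_(i in S) y i) ^+ 2 <= #|S|%:R * \sum_(i in S) y i ^+ 2.
Proof.
have sum_sqr_pairs : \sum_(i in S) \sum_(j in S) (y i ^+ 2 + y j ^+ 2) =
    2 * (#|S|%:R * \sum_(i in S) y i ^+ 2).
  rewrite (eq_bigr (fun i => #|S|%:R * y i ^+ 2 + \sum_(j in S) y j ^+ 2));
    last by move=> i _; rewrite big_split /= sumr_const mulr_natl.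
  rewrite big_split /= sumr_const -mulr_sumr -mulr_natl; ring.
rewrite -(@ler_pM2l _ 2) // -sum_sqr_pairs expr2 mulr_suml mulr_sumr.
apply: ler_sum => i _; rewrite mulr_sumr mulr_sumr; apply: ler_sum => j _.
have := sqr_ge0 (y i - y j); rewrite sqrrB; lra.
Qed.

Lemma sum_norm_le_sqrt_card_norm2 {R : realType} {k : nat} (S : {set 'I_k})
    (x : 'I_k -> R) :
  \sum_(i in S) `|x i| <= Num.sqrt #|S|%:R * norm2 x.
Proof.
have sum_ge0 : 0 <= \sum_(i in S) `|x i| by apply: sumr_ge0.
rewrite /norm2 -sqrtrM ?ler0n // -(ger0_norm sum_ge0) -sqrtr_sqr ler_sqrt;
  last by rewrite mulr_ge0 ?ler0n ?sumr_ge0 // => i _; rewrite sqr_ge0.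
apply: (le_trans (sqr_sum_le_card S (fun i => `|x i|))).
rewrite ler_wpM2l ?ler0n // [leRHS](bigID (mem S)) /=.
under eq_bigr do rewrite real_normK ?num_real //.
by rewrite lerDl sumr_ge0 // => i _; rewrite sqr_ge0.
Qed.

Lemma mulr_sqr_le_bound {R : realFieldType} {a b x : R} :
  0 < a -> 0 <= b -> 0 <= x -> a * x ^+ 2 <= b * x -> x <= b / a.
Proof.
move=> c1m_gt0 b_ge0; rewrite le_eqVlt => /predU1P[<-|x_gt0] axb.
  by rewrite divr_ge0 // ltW.
by rewrite ler_pdivlMr // mulrC -(ler_pM2r x_gt0) -mulrA -expr2.
Qed.

Lemma norm2_vsub_le_of_basic_ineq {R : realType} {n p : nat}
    (b v : 'I_p -> R) (c1 c2 g I : R) :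
  (0 < n)%N -> 0 < c1 -> 0 < c2 ->
  c2 * n%:R * norm2 (vsub v b) ^+ 2 <= g ->
  g <= 2 * `|I| - 2 * c1 * Num.sqrt n%:R * (norm1 v - norm1 b) ->
  `|I| <= c1 * Num.sqrt n%:R * norm1 (vsub v b) ->
  norm2 (vsub v b) <= 4 * c1 / c2 * Num.sqrt (#|spt b|%:R / n%:R).
Proof.
move=> n_gt0 c1_gt0 c2_gt0 cvx_lo basic noise.
set N := norm2 (vsub v b) in cvx_lo *; set m := Num.sqrt n%:R in basic noise *.
pose r : R := Num.sqrt #|spt b|%:R.
have m_gt0 : 0 < m by rewrite sqrtr_gt0 ltr0n.
have n_sqr : n%:R = m ^+ 2 by rewrite sqr_sqrtr ?ler0n.
have cone := norm1_vsub_le_spt b v.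
have cs := sum_norm_le_sqrt_card_norm2 (spt b) (vsub v b).
have c1m_gt0 : 0 < c1 * m by rewrite mulr_gt0.
have quad_le_lin : (c2 * m ^+ 2) * N ^+ 2 <= (4 * c1 * m * r) * N.
  rewrite -n_sqr; apply: (le_trans cvx_lo); apply: (le_trans basic).
  have -> : 4 * c1 * m * r * N = 2 * (c1 * m) * (2 * (r * N)) by ring.
  apply: le_trans (ler_wpM2l _ (le_trans cone (ler_wpM2l _ cs))) => //;
    last by rewrite pmulr_rge0 ?ltW.
  lra.
have -> : 4 * c1 / c2 * Num.sqrt (#|spt b|%:R / n%:R) =
    4 * c1 * m * r / (c2 * m ^+ 2).
  rewrite sqrtrM ?ler0n // sqrtrV ?ler0n // -/m -/r.
  by field; rewrite (gt_eqF m_gt0) (gt_eqF c2_gt0).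
apply: (mulr_sqr_le_bound _ _ _ quad_le_lin); last exact: sqrtr_ge0.
  by rewrite mulr_gt0 ?exprn_gt0.
by rewrite !mulr_ge0 ?(ltW c1_gt0) ?(ltW m_gt0) ?sqrtr_ge0.
Qed.

Lemma measurable_norm2 {d} {T : measurableType d} {R : realType} {k : nat}
    (f : T -> 'I_k -> R) :
  (forall j, measurable_fun setT (fun w => f w j)) ->
  measurable_fun setT (fun w => norm2 (f w)).
Proof.
move=> mf; apply: measurableT_comp.
  apply: measurable_realfun.continuous_measurable_fun; exact: sqrt_continuous.
by apply: measurable_sum => j; exact: measurable_realfun.measurable_funX.
Qed.

Theorem proposition2p1 (R : realType) (d : measure_display) (T : measurableType d)
  (P : probability T R) (n p : nat) (X : 'M[R]_(n, p)) (beta : 'I_p -> R)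
  (eps : T -> 'I_n -> R) (D : set ('I_p -> R)) (G : ('I_n -> R) -> R)
  (psi phi : 'I_n -> R -> R) (q c0 : R) (betahat : T -> 'I_p -> R) :
  (0 < n)%N ->
  0 < q < 1 -> 0 < c0 ->
  (forall i : 'I_n, measurable_fun setT (fun w => eps w i)) ->
  (forall j : 'I_p, measurable_fun setT (fun w => betahat w j)) ->
  (forall w, D (betahat w)) ->
  forall c1 c2 : R, 0 < c1 -> 0 < c2 ->
  let Ei := [set w | forall v, D v ->
       `|inner (eps w) (vsub (compapp phi (matvec X v)) (compapp phi (matvec X beta)))|
         <= c1 * Num.sqrt n%:R * norm1 (vsub v beta)] in
  measurable Ei ->
  ((1 - c0 * q)%:E <= P Ei)%E ->
  (forall v, D v ->
     G (vsub (compapp psi (matvec X v)) (compapp psi (matvec X beta)))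
       >= c2 * n%:R * norm2 (vsub v beta) ^+ 2) ->
  let c_r := 2 * c1 * Num.sqrt n%:R in
  (forall w,
     G (vsub (compapp psi (matvec X (betahat w))) (compapp psi (matvec X beta)))
       <= 2 * `|inner (eps w) (vsub (compapp phi (matvec X (betahat w)))
                                    (compapp phi (matvec X beta)))|
          - c_r * (norm1 (betahat w) - norm1 beta)) ->
  let kappa_r := 4 * c1 / c2 in
  let Ef := [set w | norm2 (vsub (betahat w) beta)
                  <= kappa_r * Num.sqrt (#|spt beta|%:R / n%:R)] in
  ((1 - c0 * q)%:E <= P Ef)%E.
Proof.
move=> n_gt0 _ _ _ m_betahat D_betahat c1 c2 c1_gt0 c2_gt0 Ei mEi PEi
  cvx_G c_r oracle; cbv zeta; set Ef := [set w | _].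
have mEf : measurable Ef.
  rewrite -[Ef]setTI; apply: measurable_fun_le => //.
  by apply: measurable_norm2 => j; exact: measurable_realfun.measurable_funB.
apply: (le_trans PEi); apply: le_measure; rewrite ?inE // => w Ei_w.
have D_w := D_betahat w.
exact: norm2_vsub_le_of_basic_ineq n_gt0 c1_gt0 c2_gt0
  (cvx_G _ D_w) (oracle w) (Ei_w _ D_w).
Qed.
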